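(* Let $G$ be a graph with an assignment $L$ of lists of colours to its edges, and let $v_1v_2$ and $w_1w_2$ be two edges of $G$ that share no endpoint. Suppose $$|L(v_1v_2)|\,|L(w_1w_2)| \;>\; \sum_{\substack{i,j\in\{1,2\}\\ v_iw_j\in E(G)}} \left\lfloor \frac{|L(v_iw_j)|}{2}\right\rfloor \left\lceil \frac{|L(v_iw_j)|}{2}\right\rceil .$$ Then there exist colours $c_1\in L(v_1v_2)$ and $c_2\in L(w_1w_2)$ that are compatible.
   Context: For edges $e,f$ of $G$ and colours $c_1\in L(e)$, $c_2\in L(f)$, the colours $c_1,c_2$ are called compatible if $c_1=c_2$, or if for every edge $g$ that is adjacent to (shares an endpoint with) both $e$ and $f$, the list $L(g)$ contains at most one of $c_1$ and $c_2$. *)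

From mathcomp Require Import all_boot.
Set Implicit Arguments. Unset Strict Implicit. Unset Printing Implicit Defensive.

(* An edge is given by an (ordered) pair of its endpoints (x, y) with adj x y;
   the list assignment L : T -> T -> {set C} is required to be symmetric on
   edges, so that L x y = L y x is the list of the (unordered) edge xy. *)
Definition simple_graph (T : finType) (adj : rel T) : Prop :=
  symmetric adj /\ irreflexive adj.

Definition list_assignment (T C : finType) (adj : rel T) (L : T -> T -> {set C}) : Prop :=
  forall x y, adj x y -> L x y = L y x.

Definition shares_endpoint (T : eqType) (x y a b : T) : bool :=
  [|| x == a, x == b, y == a | y == b].

Definition compatible (T C : finType) (adj : rel T) (L : T -> T -> {set C})
    (a b a' b' : T) (c1 c2 : C) : Prop :=
  c1 = c2 \/
  forall x y, adj x y -> shares_endpoint x y a b -> shares_endpoint x y a' b' ->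
    ~ (c1 \in L x y /\ c2 \in L x y).

Definition fc (n : nat) : nat := n./2 * uphalf n.

From mathcomp Require Import all_boot zify.
Set Implicit Arguments. Unset Strict Implicit. Unset Printing Implicit Defensive.

(* If L(v1v2) and L(w1w2) meet, a common colour is compatible with itself.
   Otherwise the pairs (c1, c2) in L(v1v2) x L(w1w2) that are NOT compatible
   all lie in the union, over the edges v_i w_j, of the sets
   (L(v1v2) :&: L(v_i w_j)) x (L(w1w2) :&: L(v_i w_j)); the two factors are
   disjoint subsets of L(v_i w_j), so each such set has at most
   floor(l/2) * ceil(l/2) elements, l = |L(v_i w_j)|.  The hypothesis then
   says that this union cannot cover all of L(v1v2) x L(w1w2). *)

Lemma leq_mul_fc a b n : a + b <= n -> a * b <= fc n.
Proof.
wlog le_ab : a b / a <= b.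
  move=> wlog_ab; case: (leqP a b) => [|/ltnW]; first exact: wlog_ab.
  by rewrite mulnC addnC; apply: wlog_ab.
(* Then a <= n./2, and a * b <= a * (n - a) <= n./2 * (n - n./2). *)
rewrite /fc uphalf_half; have := odd_double_half n.
case: (odd n) => /= n_eq ab_le; nia.
Qed.

Lemma leq_card_bigcup (I : Type) (C : finType) (r : seq I) (P : pred I)
    (F : I -> {set C}) :
  #|\bigcup_(i <- r | P i) F i| <= \sum_(i <- r | P i) #|F i|.
Proof.
apply: (big_ind2 (fun (X : {set C}) n => #|X| <= n)) => //.
  by rewrite cards0.
move=> X m Y n leXm leYn.
exact: leq_trans (leq_card_setU X Y) (leq_add leXm leYn).
Qed.

Lemma mem_bigcup_seq (I C : finType) (r : seq I) (P : pred I)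
    (F : I -> {set C}) j x :
  j \in r -> P j -> x \in F j -> x \in \bigcup_(i <- r | P i) F i.
Proof.
move=> rj Pj Fx; rewrite -big_filter bigcup_seq.
by apply/bigcupP; exists j; rewrite ?mem_filter ?Pj.
Qed.

Lemma card_setX_setI_disjoint (C : finType) (A B S : {set C}) :
  [disjoint A & B] -> #|setX (A :&: S) (B :&: S)| <= fc #|S|.
Proof.
move=> disjAB; rewrite cardsX; apply: leq_mul_fc.
have disjAS_BS : [disjoint A :&: S & B :&: S].
  by apply: disjointWl (subsetIl A S) _; apply: disjointWr (subsetIl B S) _.
have /eqP <- : #|(A :&: S) :|: (B :&: S)| == #|A :&: S| + #|B :&: S|.
  by rewrite (leq_card_setU _ _).2.
by apply: subset_leq_card; rewrite -setIUl subsetIr.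
Qed.

Lemma shares_endpoint_cross (T : eqType) (x y v1 v2 w1 w2 : T) :
  x != y -> v1 != w1 -> v1 != w2 -> v2 != w1 -> v2 != w2 ->
  shares_endpoint x y v1 v2 -> shares_endpoint x y w1 w2 ->
  let cross := [:: (v1, w1); (v1, w2); (v2, w1); (v2, w2)] in
  ((x, y) \in cross) || ((y, x) \in cross).
Proof.
move=> xy n11 n12 n21 n22; rewrite /shares_endpoint /= !inE !xpair_eqE.
by case/or4P => /eqP-> /or4P[] /eqP eq_w; subst;
  rewrite ?eqxx ?orbT //; move: xy n11 n12 n21 n22; rewrite ?eqxx.
Qed.

Theorem lemma9 (T C : finType) (adj : rel T) (L : T -> T -> {set C})
    (v1 v2 w1 w2 : T) :
  simple_graph adj -> list_assignment adj L ->
  adj v1 v2 -> adj w1 w2 ->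
  v1 != w1 -> v1 != w2 -> v2 != w1 -> v2 != w2 ->
  #|L v1 v2| * #|L w1 w2| >
    \sum_(p <- [:: (v1, w1); (v1, w2); (v2, w1); (v2, w2)] | adj p.1 p.2)
       fc #|L p.1 p.2| ->
  exists c1 c2, [/\ c1 \in L v1 v2, c2 \in L w1 w2 &
                    compatible adj L v1 v2 w1 w2 c1 c2].
Proof.
move=> [adj_sym adj_irr] L_sym _ _ n11 n12 n21 n22.
set A := L v1 v2; set B := L w1 w2; set cross := [:: _; _; _; _] => Hsum.
have [/eqP/[!setI_eq0] disjAB | [c]] := set_0Vmem (A :&: B); last first.
  by rewrite inE => /andP[cA cB]; exists c, c; split => //; left.
pose bad := \bigcup_(p <- cross | adj p.1 p.2)
              setX (A :&: L p.1 p.2) (B :&: L p.1 p.2).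
have card_bad : #|bad| < #|setX A B|.
  rewrite cardsX; apply: leq_ltn_trans Hsum.
  apply: leq_trans (leq_card_bigcup _ _ _) _.
  by apply: leq_sum => p _; apply: card_setX_setI_disjoint.
have [[c1 c2]] : exists2 c, c \in setX A B & c \notin bad.
  apply/subsetPn; apply: contraTN card_bad => /subset_leq_card.
  by rewrite leqNgt.
rewrite inE => /andP[c1A c2B] c_good; exists c1, c2; split => //; right.
move=> x y xy sh_v sh_w [c1L c2L]; apply: (negP c_good).
have bad_edge p : p \in cross -> adj p.1 p.2 ->
    c1 \in L p.1 p.2 -> c2 \in L p.1 p.2 -> (c1, c2) \in bad.
  move=> p_cross p_adj c1p c2p; apply: mem_bigcup_seq p_cross _ _ => //.
  by rewrite !inE c1A c2B c1p c2p.
have x_neq_y : x != y by apply: contraTneq xy => ->; rewrite adj_irr.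
case/orP: (shares_endpoint_cross x_neq_y n11 n12 n21 n22 sh_v sh_w) => /bad_edge.
  by apply.
by rewrite /= -(L_sym _ _ xy) adj_sym; apply.
Qed.
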